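(* Let $\mathbb{X}$ be a Cartesian left additive category. If $f_\bullet:A\to B$ and $g_\bullet:B\to C$ are $\mathsf{D}$-sequences, then $f_\bullet\ast g_\bullet$ is a $\mathsf{D}$-sequence.
   Context: Composition in diagrammatic order. A Cartesian left additive category: finite products, hom-sets commutative monoids with $f(g+h)=fg+fh$, $f0=0$, projections additive. $\mathsf{P}(X)=X\times X$, $\mathsf{P}(f)=f\times f$. A pre-$\mathsf{D}$-sequence $f_\bullet:A\to B$ is $(f_n)_{n\ge0}$ with $f_n:\mathsf{P}^n(A)\to B$; $(h\cdot f_\bullet)_n=\mathsf{P}^n(h)f_n$; $\mathsf{T}(f_\bullet)_n=\langle\mathsf{P}^n(\pi_0)f_n,f_{n+1}\rangle$; $\mathsf{D}[f_\bullet]_n=f_{n+1}$; sums and $0_\bullet$ pointwise; composition $(f_\bullet\ast g_\bullet)_n=\mathsf{T}^n(f_\bullet)_0g_n$. A $\mathsf{D}$-sequence is a pre-$\mathsf{D}$-sequence such that for all $n$, with $X=\mathsf{P}^n(A)$: $\langle1,0\rangle\cdot\mathsf{D}^{n+1}[f_\bullet]=0_\bullet$ ($\langle1,0\rangle:X\to X\times X$); $(1\times(\pi_0+\pi_1))\cdot\mathsf{D}^{n+1}[f_\bullet]=(1\times\pi_0)\cdot\mathsf{D}^{n+1}[f_\bullet]+(1\times\pi_1)\cdot\mathsf{D}^{n+1}[f_\bullet]$ (maps $X\times(X\times X)\to X\times X$); $\ell\cdot\mathsf{D}^{n+2}[f_\bullet]=\mathsf{D}^{n+1}[f_\bullet]$,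 $\ell=\langle1,0\rangle\times\langle0,1\rangle:X\times X\to(X\times X)\times(X\times X)$; $c\cdot\mathsf{D}^{n+2}[f_\bullet]=\mathsf{D}^{n+2}[f_\bullet]$, $c=\langle\langle\pi_0\pi_0,\pi_1\pi_0\rangle,\langle\pi_0\pi_1,\pi_1\pi_1\rangle\rangle$. *)

(* Composition is written in DIAGRAMMATIC order: comp f g = "f then g" = fg. *)
Set Implicit Arguments.

Record CLAC := {
  ob :> Type;
  hom : ob -> ob -> Type;
  comp : forall A B C : ob, hom A B -> hom B C -> hom A C;
  idm : forall A : ob, hom A A;
  comp_id_l : forall (A B : ob) (f : hom A B), comp (idm A) f = f;
  comp_id_r : forall (A B : ob) (f : hom A B), comp f (idm B) = f;
  comp_assoc : forall (A B C D : ob) (f : hom A B) (g : hom B C) (h : hom C D),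
      comp (comp f g) h = comp f (comp g h);
  add : forall A B : ob, hom A B -> hom A B -> hom A B;
  zero : forall A B : ob, hom A B;
  add_assoc : forall (A B : ob) (f g h : hom A B), add (add f g) h = add f (add g h);
  add_comm : forall (A B : ob) (f g : hom A B), add f g = add g f;
  add_0l : forall (A B : ob) (f : hom A B), add (zero A B) f = f;
  comp_addr : forall (A B C : ob) (f : hom A B) (g h : hom B C),
      comp f (add g h) = add (comp f g) (comp f h);
  comp_0r : forall (A B C : ob) (f : hom A B), comp f (zero B C) = zero A C;
  term : ob;
  bang : forall A : ob, hom A term;
  bang_uniq : forall (A : ob) (f : hom A term), f = bang A;
  prod : ob -> ob -> ob;
  pi0 : forall A B : ob, hom (prod A B) A;
  pi1 : forall A B : ob, hom (prod A B) B;
  pair : forall A B C : ob, hom C A -> hom C B -> hom C (prod A B);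
  pair_pi0 : forall (A B C : ob) (f : hom C A) (g : hom C B), comp (pair f g) (pi0 A B) = f;
  pair_pi1 : forall (A B C : ob) (f : hom C A) (g : hom C B), comp (pair f g) (pi1 A B) = g;
  pair_uniq : forall (A B C : ob) (h : hom C (prod A B)),
      h = pair (comp h (pi0 A B)) (comp h (pi1 A B));
  pi0_add : forall (A B C : ob) (f g : hom C (prod A B)),
      comp (add f g) (pi0 A B) = add (comp f (pi0 A B)) (comp g (pi0 A B));
  pi0_zero : forall (A B C : ob), comp (zero C (prod A B)) (pi0 A B) = zero C A;
  pi1_add : forall (A B C : ob) (f g : hom C (prod A B)),
      comp (add f g) (pi1 A B) = add (comp f (pi1 A B)) (comp g (pi1 A B));
  pi1_zero : forall (A B C : ob), comp (zero C (prod A B)) (pi1 A B) = zero C B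
}.

Arguments hom {c} _ _.
Arguments comp {c A B C} _ _.
Arguments idm {c} A.
Arguments add {c A B} _ _.
Arguments zero {c} A B.
Arguments term {c}.
Arguments bang {c} A.
Arguments prod {c} _ _.
Arguments pi0 {c A B}.
Arguments pi1 {c A B}.
Arguments pair {c A B C} _ _.

Section Dseq.
Variable X : CLAC.

Definition Pob (A : X) : X := prod A A.
Definition cross {A B A' B' : X} (f : hom A A') (g : hom B B') : hom (prod A B) (prod A' B') :=
  pair (comp pi0 f) (comp pi1 g).
Definition Pmorph {A B : X} (f : hom A B) : hom (Pob A) (Pob B) := cross f f.

(** P^n on objects.  [Pn] iterates "inside" (P^{n+1}(A) = P^n(P(A))), [Po] iterates
    "outside" (P^{n+1}(A) = P(P^n(A))); both are the same object P^n(A) (the two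
    presentations are only chosen to make the various components typecheck
    definitionally). *)
Fixpoint Pn (n : nat) (A : X) : X :=
  match n with O => A | S n' => Pn n' (Pob A) end.
Fixpoint Po (n : nat) (A : X) : X :=
  match n with O => A | S n' => Pob (Po n' A) end.

Fixpoint Pmor (n : nat) {A B : X} (h : hom A B) : hom (Pn n A) (Pn n B) :=
  match n return hom (Pn n A) (Pn n B) with
  | O => h
  | S n' => Pmor n' (Pmorph h)
  end.

Definition preD (A B : X) : Type := forall n : nat, hom (Pn n A) B.

Definition act {A A' B : X} (h : hom A A') (f : preD A' B) : preD A B :=
  fun n => comp (Pmor n h) (f n).
Definition seq_add {A B : X} (f g : preD A B) : preD A B := fun n => add (f n) (g n).
Definition seq_zero (A B : X) : preD A B := fun n => zero (Pn n A) B.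
Definition Tseq {A B : X} (f : preD A B) : preD (Pob A) (Pob B) :=
  fun n => pair (comp (Pmor n pi0) (f n)) (f (S n)).
Definition Dseq {A B : X} (f : preD A B) : preD (Pob A) B := fun n => f (S n).

Fixpoint Tit (n : nat) {A B : X} (f : preD A B) : preD (Pn n A) (Pn n B) :=
  match n return preD (Pn n A) (Pn n B) with
  | O => f
  | S n' => Tit n' (Tseq f)
  end.
Fixpoint Dit (n : nat) {A B : X} (f : preD A B) : preD (Po n A) B :=
  match n return preD (Po n A) B with
  | O => f
  | S n' => Dseq (Dit n' f)
  end.

Definition dcomp {A B C : X} (f : preD A B) (g : preD B C) : preD A C :=
  fun n => comp (Tit n f 0) (g n).

Definition seq_eq {A B : X} (f g : preD A B) : Prop := forall n, f n = g n.

Definition is_Dseq {A B : X} (f : preD A B) : Prop :=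
  forall n : nat,
    let Y := Po n A in
    seq_eq (act (pair (idm Y) (zero Y Y)) (Dit (S n) f)) (seq_zero Y B)
    /\ seq_eq (act (cross (idm Y) (add (@pi0 _ Y Y) (@pi1 _ Y Y))) (Dit (S n) f))
              (seq_add (act (cross (idm Y) (@pi0 _ Y Y)) (Dit (S n) f))
                       (act (cross (idm Y) (@pi1 _ Y Y)) (Dit (S n) f)))
    /\ seq_eq (act (cross (pair (idm Y) (zero Y Y)) (pair (zero Y Y) (idm Y)))
                   (Dit (S (S n)) f))
              (Dit (S n) f)
    /\ seq_eq (act (pair (pair (comp pi0 pi0) (comp pi1 pi0))
                         (pair (comp pi0 pi1) (comp pi1 pi1)) : hom (Pob (Pob Y)) (Pob (Pob Y)))
                   (Dit (S (S n)) f))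
              (Dit (S (S n)) f).
End Dseq.

Arguments Pob {X} A.
Arguments Pn {X} n A.
Arguments Po {X} n A.
Arguments preD {X} A B.
Arguments dcomp {X A B C} f g n.
Arguments is_Dseq {X A B} f.
Arguments Dit {X} n {A B} f _.
Arguments Tit {X} n {A B} f _.

(* D[f * g] = T(f) * D[g] holds componentwise by definition.  Hence the axioms for
   D[f * g] follow from those for D[g], read as additivity, linearity and symmetry of D[g]
   in its second argument, once the axioms for f have put T(f) and T(T(f)) into the
   matching shape.  Higher derivatives reduce to this case, since
   D^{n+1}[f * g] = D^n[T(f) * D[g]] and T and D preserve D-sequences: the components of
   T(f) are derivatives of f, some precomposed with the additive projection P^n(pi0). *)
From Stdlib Require Import Setoid Morphisms.

Section DSequences.
Local Set Implicit Arguments.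
Local Unset Strict Implicit.
Variable X : CLAC.

Lemma comp_pair (A B C D : X) (h : hom D C) (f : hom C A) (g : hom C B) :
  comp h (pair f g) = pair (comp h f) (comp h g).
Proof.
  rewrite (pair_uniq _ _ _ _ (comp h (pair f g))), !comp_assoc, pair_pi0, pair_pi1.
  reflexivity.
Qed.

Lemma comp_pair_assoc (A B C D E : X) (h : hom D C) (f : hom C A) (g : hom C B)
    (k : hom (prod A B) E) :
  comp h (comp (pair f g) k) = comp (pair (comp h f) (comp h g)) k.
Proof. rewrite <- comp_assoc, comp_pair; reflexivity. Qed.

Lemma pair_pi0_comp (A B C D : X) (f : hom C A) (g : hom C B) (h : hom A D) :
  comp (pair f g) (comp pi0 h) = comp f h.
Proof. rewrite <- comp_assoc, pair_pi0; reflexivity. Qed.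

Lemma pair_pi1_comp (A B C D : X) (f : hom C A) (g : hom C B) (h : hom B D) :
  comp (pair f g) (comp pi1 h) = comp g h.
Proof. rewrite <- comp_assoc, pair_pi1; reflexivity. Qed.

Lemma zero_pi0_comp (A B Z D : X) (h : hom A D) :
  comp (zero Z (prod A B)) (comp pi0 h) = comp (zero Z A) h.
Proof. rewrite <- comp_assoc, pi0_zero; reflexivity. Qed.

Lemma zero_pi1_comp (A B Z D : X) (h : hom B D) :
  comp (zero Z (prod A B)) (comp pi1 h) = comp (zero Z B) h.
Proof. rewrite <- comp_assoc, pi1_zero; reflexivity. Qed.

Lemma add_pi0_comp (A B Z D : X) (a b : hom Z (prod A B)) (h : hom A D) :
  comp (add a b) (comp pi0 h) = comp (add (comp a pi0) (comp b pi0)) h.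
Proof. rewrite <- comp_assoc, pi0_add; reflexivity. Qed.

Lemma add_pi1_comp (A B Z D : X) (a b : hom Z (prod A B)) (h : hom B D) :
  comp (add a b) (comp pi1 h) = comp (add (comp a pi1) (comp b pi1)) h.
Proof. rewrite <- comp_assoc, pi1_add; reflexivity. Qed.

Lemma hom_prod_ext (A B Z : X) (f g : hom Z (prod A B)) :
  comp f pi0 = comp g pi0 -> comp f pi1 = comp g pi1 -> f = g.
Proof.
  intros E0 E1; rewrite (pair_uniq _ _ _ _ f), (pair_uniq _ _ _ _ g), E0, E1.
  reflexivity.
Qed.

Ltac prod_simpl :=
  repeat progress rewrite ?comp_assoc, ?pair_pi0, ?pair_pi1, ?pair_pi0_comp,
    ?pair_pi1_comp, ?comp_id_l, ?comp_id_r, ?comp_0r, ?comp_pair, ?comp_pair_assoc,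
    ?comp_addr, ?zero_pi0_comp, ?zero_pi1_comp, ?pi0_zero, ?pi1_zero, ?add_pi0_comp,
    ?add_pi1_comp, ?pi0_add, ?pi1_add.

Ltac prod_norm := repeat apply hom_prod_ext; unfold Pmorph, cross, Pob; prod_simpl.
Ltac prod_ext := prod_norm; reflexivity.

Lemma cross_comp (A B A' B' A'' B'' : X) (f : hom A A') (g : hom B B')
    (f' : hom A' A'') (g' : hom B' B'') :
  comp (cross X f g) (cross X f' g') = cross X (comp f f') (comp g g').
Proof. prod_ext. Qed.

Lemma Pmor_comp n : forall (A B C : X) (f : hom A B) (g : hom B C),
  Pmor X n (comp f g) = comp (Pmor X n f) (Pmor X n g).
Proof.
  induction n as [|n IHn]; intros; simpl; [reflexivity|].
  unfold Pmorph; rewrite <- IHn; f_equal; symmetry; apply cross_comp.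
Qed.

Lemma Pmor_id n : forall A : X, Pmor X n (idm A) = idm _.
Proof.
  induction n as [|n IHn]; intros; simpl; [reflexivity|].
  rewrite <- (IHn (Pob A)); f_equal; prod_ext.
Qed.

Definition additive (Y Y' : X) (h : hom Y Y') : Prop :=
  (forall Z, comp (zero Z Y) h = zero Z Y') /\
  (forall Z (a b : hom Z Y), comp (add a b) h = add (comp a h) (comp b h)).

Lemma additive_pi0 (A B : X) : additive (@pi0 X A B).
Proof. split; intros; [apply pi0_zero | apply pi0_add]. Qed.

Lemma additive_Pmorph (Y Y' : X) (h : hom Y Y') : additive h -> additive (Pmorph X h).
Proof.
  intros [h0 hD]; split; intros; prod_norm; rewrite ?h0, ?hD; prod_simpl; reflexivity.
Qed.

Lemma additive_Pmor n : forall (Y Y' : X) (h : hom Y Y'), additive h -> additive (Pmor X n h).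
Proof. induction n; intros; simpl; auto using additive_Pmorph. Qed.

Local Notation "u == v" := (seq_eq u v) (at level 70).

Global Instance seq_eq_Equivalence (A B : X) : Equivalence (@seq_eq X A B).
Proof. split; intro; intros; intro n; [reflexivity | symmetry | etransitivity]; eauto. Qed.

Definition spair (Z B B' : X) (u : preD Z B) (v : preD Z B') : preD Z (prod B B') :=
  fun n => pair (u n) (v n).

Definition post (Z B B' : X) (u : preD Z B) (l : hom B B') : preD Z B' :=
  fun n => comp (u n) l.

Global Instance act_Proper (A A' B : X) (h : hom A A') :
  Proper (@seq_eq X _ _ ==> @seq_eq X _ _) (@act X A A' B h).
Proof. intros u v E n; unfold act; rewrite (E n); reflexivity. Qed.

Global Instance seq_add_Proper (Z B : X) :
  Proper (@seq_eq X _ _ ==> @seq_eq X _ _ ==> @seq_eq X _ _) (@seq_add X Z B).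
Proof. intros u v E u' v' E' n; unfold seq_add; rewrite (E n), (E' n); reflexivity. Qed.

Global Instance spair_Proper (Z B B' : X) :
  Proper (@seq_eq X _ _ ==> @seq_eq X _ _ ==> @seq_eq X _ _) (@spair Z B B').
Proof. intros u v E u' v' E' n; unfold spair; rewrite (E n), (E' n); reflexivity. Qed.

Global Instance Dseq_Proper (Z B : X) : Proper (@seq_eq X _ _ ==> @seq_eq X _ _) (@Dseq X Z B).
Proof. intros u v E n; apply (E (S n)). Qed.

Global Instance Tseq_Proper (Z B : X) : Proper (@seq_eq X _ _ ==> @seq_eq X _ _) (@Tseq X Z B).
Proof. intros u v E n; unfold Tseq; rewrite (E n), (E (S n)); reflexivity. Qed.

Global Instance Tit_Proper m (A B : X) :
  Proper (@seq_eq X _ _ ==> @seq_eq X _ _) (@Tit X m A B).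
Proof.
  revert A B; induction m as [|m IHm]; intros A B u v E; simpl; [exact E|].
  apply IHm; rewrite E; reflexivity.
Qed.

Global Instance dcomp_Proper (A B C : X) :
  Proper (@seq_eq X _ _ ==> @seq_eq X _ _ ==> @seq_eq X _ _) (@dcomp X A B C).
Proof.
  intros u v E u' v' E' n; unfold dcomp; rewrite (Tit_Proper n E 0), (E' n).
  reflexivity.
Qed.

Lemma act_act (A A' A'' B : X) (k : hom A A') (h : hom A' A'') (u : preD A'' B) :
  act k (act h u) == act (comp k h) u.
Proof. intro n; unfold act; rewrite Pmor_comp, comp_assoc; reflexivity. Qed.

Lemma act_id (A B : X) (u : preD A B) : act (idm A) u == u.
Proof. intro n; unfold act; rewrite Pmor_id, comp_id_l; reflexivity. Qed.

Lemma act_square (A A1 A2 A' B : X) (k : hom A A1) (h : hom A1 A')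
    (h' : hom A A2) (k' : hom A2 A') (u : preD A' B) :
  comp k h = comp h' k' -> act k (act h u) == act h' (act k' u).
Proof. intro E; rewrite !act_act, E; reflexivity. Qed.

Lemma act_add (A A' B : X) (h : hom A A') (u v : preD A' B) :
  act h (seq_add u v) == seq_add (act h u) (act h v).
Proof. intro n; apply comp_addr. Qed.

Lemma act_zero (A A' B : X) (h : hom A A') : act h (seq_zero X A' B) == seq_zero X A B.
Proof. intro n; apply comp_0r. Qed.

Lemma act_spair (A A' B B' : X) (h : hom A A') (u : preD A' B) (v : preD A' B') :
  act h (spair u v) == spair (act h u) (act h v).
Proof. intro n; apply comp_pair. Qed.

Lemma spair_zero (A B B' : X) :
  spair (seq_zero X A B) (seq_zero X A B') == seq_zero X A (prod B B').
Proof. intro n; unfold spair, seq_zero; prod_ext. Qed.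

Lemma spair_add (A B B' : X) (a b : preD A B) (c d : preD A B') :
  spair (seq_add a b) (seq_add c d) == seq_add (spair a c) (spair b d).
Proof. intro n; unfold spair, seq_add; prod_ext. Qed.

Lemma act_Tseq (A A' B : X) (k : hom A (prod A' A')) (F : preD A' B) :
  act k (Tseq F) == spair (act (comp k pi0) F) (act k (Dseq F)).
Proof.
  intro n; unfold act, Tseq, spair, Pob; rewrite comp_pair, Pmor_comp, comp_assoc.
  reflexivity.
Qed.

Lemma Tseq_act (A A' B : X) (k : hom A A') (F : preD A' B) :
  Tseq (act k F) == act (Pmorph X k) (Tseq F).
Proof.
  intro n; unfold Tseq, act, Pob; rewrite comp_pair, <- !comp_assoc, <- !Pmor_comp.
  do 3 f_equal; prod_ext.
Qed.

Lemma Tit_act m : forall (A A' B : X) (k : hom A A') (F : preD A' B),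
  Tit m (act k F) == act (Pmor X m k) (Tit m F).
Proof. induction m as [|m IHm]; intros; simpl; [reflexivity|]. rewrite Tseq_act; apply IHm. Qed.

Lemma Tseq_post (A B B' : X) (F : preD A B) (l : hom B B') :
  Tseq (post F l) == post (Tseq F) (Pmorph X l).
Proof. intro n; unfold Tseq, post; prod_ext. Qed.

Lemma Tit_post m : forall (A B B' : X) (F : preD A B) (l : hom B B'),
  Tit m (post F l) == post (Tit m F) (Pmor X m l).
Proof. induction m as [|m IHm]; intros; simpl; [reflexivity|]. rewrite Tseq_post; apply IHm. Qed.

Lemma act_dcomp (A A' B C : X) (k : hom A A') (F : preD A' B) (G : preD B C) :
  act k (dcomp F G) == dcomp (act k F) G.
Proof.
  intro n; unfold dcomp; rewrite (Tit_act n k F 0); unfold act.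
  symmetry; apply comp_assoc.
Qed.

Lemma dcomp_post (A B B' C : X) (F : preD A B) (l : hom B B') (G : preD B' C) :
  dcomp (post F l) G == dcomp F (act l G).
Proof.
  intro n; unfold dcomp; rewrite (Tit_post n F l 0); unfold post, act.
  apply comp_assoc.
Qed.

Lemma dcomp_addr (A B C : X) (F : preD A B) (G G' : preD B C) :
  dcomp F (seq_add G G') == seq_add (dcomp F G) (dcomp F G').
Proof. intro n; apply comp_addr. Qed.

Lemma dcomp_0r (A B C : X) (F : preD A B) : dcomp F (seq_zero X B C) == seq_zero X A C.
Proof. intro n; apply comp_0r. Qed.

Lemma Dseq_dcomp (A B C : X) (F : preD A B) (G : preD B C) :
  Dseq (dcomp F G) == dcomp (Tseq F) (Dseq G).
Proof. intro n; reflexivity. Qed.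

Lemma Tseq_Tseq (A B : X) (F : preD A B) :
  Tseq (Tseq F) == spair (spair (act (comp pi0 pi0) F) (act pi0 (Dseq F)))
                         (spair (act (Pmorph X pi0) (Dseq F)) (Dseq (Dseq F))).
Proof.
  intro n; unfold Tseq, spair, act, Dseq, Pob.
  rewrite comp_pair, Pmor_comp, comp_assoc; reflexivity.
Qed.

(** * The D-sequence axioms *)

Local Notation inj0 Y := (pair (idm Y) (zero Y Y)).
Local Notation lin Y := (cross X (pair (idm Y) (zero Y Y)) (pair (zero Y Y) (idm Y))).
Local Notation swap Y :=
  (pair (pair (comp pi0 pi0) (comp pi1 pi0)) (pair (comp pi0 pi1) (comp pi1 pi1))
   : hom (Pob (Pob Y)) (Pob (Pob Y))).

Definition Dzero_ax (Y B : X) (h : preD (Pob Y) B) : Prop :=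
  act (inj0 Y) h == seq_zero X Y B.

Definition Dadd_ax (Y B : X) (h : preD (Pob Y) B) : Prop :=
  act (cross X (idm Y) (add (@pi0 X Y Y) (@pi1 X Y Y))) h ==
  seq_add (act (cross X (idm Y) (@pi0 X Y Y)) h) (act (cross X (idm Y) (@pi1 X Y Y)) h).

Definition Dlin_ax (Y B : X) (h : preD (Pob Y) B) : Prop :=
  act (lin Y) (Dseq h) == h.

Definition Dsym_ax (Y B : X) (h : preD (Pob Y) B) : Prop :=
  act (swap Y) (Dseq h) == Dseq h.

Definition Daxioms (Y B : X) (h : preD (Pob Y) B) : Prop :=
  Dzero_ax h /\ Dadd_ax h /\ Dlin_ax h /\ Dsym_ax h.

Global Instance Daxioms_Proper (Y B : X) : Proper (@seq_eq X _ _ ==> iff) (@Daxioms Y B).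
Proof.
  intros u v E; unfold Daxioms, Dzero_ax, Dadd_ax, Dlin_ax, Dsym_ax; rewrite E; reflexivity.
Qed.

Lemma Dseq_spair (Z B B' : X) (u : preD Z B) (v : preD Z B') :
  Dseq (spair u v) == spair (Dseq u) (Dseq v).
Proof. intro n; reflexivity. Qed.

Lemma Dseq_act (A A' B : X) (h : hom A A') (u : preD A' B) :
  Dseq (act h u) == act (Pmorph X h) (Dseq u).
Proof. intro n; reflexivity. Qed.

Lemma Daxioms_spair (Y B B' : X) (u : preD (Pob Y) B) (v : preD (Pob Y) B') :
  Daxioms u -> Daxioms v -> Daxioms (spair u v).
Proof.
  intros (u0 & uadd & ulin & usym) (v0 & vadd & vlin & vsym).
  red in u0, uadd, ulin, usym, v0, vadd, vlin, vsym.
  split; [|split; [|split]]; red; rewrite ?Dseq_spair, !act_spair.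
  - rewrite u0, v0; apply spair_zero.
  - rewrite uadd, vadd; apply spair_add.
  - rewrite ulin, vlin; reflexivity.
  - rewrite usym, vsym; reflexivity.
Qed.

(* The structure maps defining the axioms commute with P(h) and P(P(h)); for the
   additivity axiom this needs h additive. *)
Lemma Daxioms_act_Pmorph (Y Y' B : X) (h : hom Y' Y) (u : preD (Pob Y) B) :
  additive h -> Daxioms u -> Daxioms (act (Pmorph X h) u).
Proof.
  intros [h0 hD] (u0 & uadd & ulin & usym); red in u0, uadd, ulin, usym.
  split; [|split; [|split]]; red; rewrite ?Dseq_act.
  - transitivity (act h (act (inj0 Y) u)).
    { apply act_square; prod_norm; rewrite ?h0; reflexivity. }
    rewrite u0; apply act_zero.
  - assert (Hsq : forall (s' : hom (prod Y' Y') Y') (s : hom (prod Y Y) Y),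
               comp s' h = comp (cross X h h) s ->
               act (cross X (idm Y') s') (act (Pmorph X h) u) ==
               act (cross X h (cross X h h)) (act (cross X (idm Y) s) u)).
    { intros s' s E; apply act_square; prod_norm; rewrite ?E; prod_ext. }
    rewrite (Hsq _ (add pi0 pi1)), (Hsq _ pi0), (Hsq _ pi1) by (rewrite ?hD; prod_ext).
    rewrite uadd; apply act_add.
  - transitivity (act (Pmorph X h) (act (lin Y) (Dseq u))).
    { apply act_square; prod_norm; rewrite ?h0; reflexivity. }
    rewrite ulin; reflexivity.
  - transitivity (act (Pmorph X (Pmorph X h)) (act (swap Y) (Dseq u))).
    { apply act_square; prod_ext. }
    rewrite usym; reflexivity.
Qed.

Section SecondArgument.
Variables (Z B C : X) (G : preD (Pob B) C).

Lemma dcomp_spair_zero (p : preD Z B) :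
  Dzero_ax G -> dcomp (spair p (seq_zero X Z B)) G == seq_zero X Z C.
Proof.
  intro HG; red in HG.
  assert (Ep : spair p (seq_zero X Z B) == post p (inj0 B))
    by (intro n; unfold spair, post, seq_zero; prod_ext).
  rewrite Ep, dcomp_post, HG; apply dcomp_0r.
Qed.

Lemma dcomp_spair_add (p a b : preD Z B) :
  Dadd_ax G ->
  dcomp (spair p (seq_add a b)) G == seq_add (dcomp (spair p a) G) (dcomp (spair p b) G).
Proof.
  intro HG; red in HG.
  set (W := spair p (spair a b)).
  assert (Eab : spair p (seq_add a b) == post W (cross X (idm B) (add pi0 pi1)))
    by (intro n; unfold W, spair, post, seq_add; prod_ext).
  assert (Ea : spair p a == post W (cross X (idm B) pi0))
    by (intro n; unfold W, spair, post; prod_ext).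
  assert (Eb : spair p b == post W (cross X (idm B) pi1))
    by (intro n; unfold W, spair, post; prod_ext).
  rewrite Eab, Ea, Eb, !dcomp_post, HG; apply dcomp_addr.
Qed.

Lemma dcomp_lin (p q : preD Z B) :
  Dlin_ax G ->
  dcomp (spair (spair p (seq_zero X Z B)) (spair (seq_zero X Z B) q)) (Dseq G) ==
  dcomp (spair p q) G.
Proof.
  intro HG; red in HG.
  assert (E : spair (spair p (seq_zero X Z B)) (spair (seq_zero X Z B) q) ==
              post (spair p q) (lin B))
    by (intro n; unfold spair, post, seq_zero; prod_ext).
  rewrite E, dcomp_post, HG; reflexivity.
Qed.

Lemma dcomp_swap (a b c d : preD Z B) :
  Dsym_ax G ->
  dcomp (spair (spair a b) (spair c d)) (Dseq G) ==
  dcomp (spair (spair a c) (spair b d)) (Dseq G).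
Proof.
  intro HG; red in HG.
  assert (E : spair (spair a b) (spair c d) == post (spair (spair a c) (spair b d)) (swap B))
    by (intro n; unfold spair, post; prod_ext).
  rewrite E, dcomp_post, HG; reflexivity.
Qed.

End SecondArgument.

Section FirstArgument.
Variables (A B : X) (F : preD A B).

Lemma act_inj0_Tseq : Dzero_ax (Dseq F) -> act (inj0 A) (Tseq F) == spair F (seq_zero X A B).
Proof.
  intro HF; red in HF.
  rewrite act_Tseq, HF, pair_pi0, act_id; reflexivity.
Qed.

Lemma act_cross_Tseq (s : hom (Pob A) A) :
  act (cross X (idm A) s) (Tseq F) == spair (act pi0 F) (act (cross X (idm A) s) (Dseq F)).
Proof.
  rewrite act_Tseq.
  assert (E : comp (cross X (idm A) s) pi0 = pi0) by prod_ext.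
  rewrite E; reflexivity.
Qed.

Lemma act_lin_Tseq_Tseq :
  Dzero_ax (Dseq F) -> Dlin_ax (Dseq F) ->
  act (lin A) (Tseq (Tseq F)) ==
  spair (spair (act pi0 F) (seq_zero X _ B)) (spair (seq_zero X _ B) (Dseq F)).
Proof.
  intros H0 Hlin; red in H0, Hlin.
  (* Unlike [rewrite], [setoid_rewrite] matches implicit arguments up to unfolding [Pob]. *)
  rewrite Tseq_Tseq; repeat setoid_rewrite act_spair; setoid_rewrite act_act; rewrite Hlin.
  assert (E00 : comp (lin A) (comp pi0 pi0) = pi0) by prod_ext.
  assert (E0 : comp (lin A) pi0 = comp pi0 (inj0 A)) by prod_ext.
  assert (EP : comp (lin A) (Pmorph X pi0) = comp pi0 (inj0 A)) by prod_ext.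
  setoid_rewrite E00; setoid_rewrite E0; setoid_rewrite EP.
  setoid_rewrite <- act_act; setoid_rewrite H0; setoid_rewrite act_zero; reflexivity.
Qed.

Lemma act_swap_Tseq_Tseq :
  Dsym_ax (Dseq F) ->
  act (swap A) (Tseq (Tseq F)) ==
  spair (spair (act (comp pi0 pi0) F) (act (Pmorph X pi0) (Dseq F)))
        (spair (act pi0 (Dseq F)) (Dseq (Dseq F))).
Proof.
  intro Hsym; red in Hsym.
  rewrite Tseq_Tseq; repeat setoid_rewrite act_spair; setoid_rewrite act_act; rewrite Hsym.
  assert (E00 : comp (swap A) (comp pi0 pi0) = comp pi0 pi0) by prod_ext.
  assert (E0 : comp (swap A) pi0 = Pmorph X pi0) by prod_ext.
  assert (EP : comp (swap A) (Pmorph X pi0) = pi0) by prod_ext.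
  setoid_rewrite E00; setoid_rewrite E0; setoid_rewrite EP; reflexivity.
Qed.

End FirstArgument.

Lemma Daxioms_dcomp (A B C : X) (F : preD A B) (G : preD B C) :
  Daxioms (Dseq F) -> Daxioms (Dseq G) -> Daxioms (Dseq (dcomp F G)).
Proof.
  intros (F0 & Fadd & Flin & Fsym) (G0 & Gadd & Glin & Gsym).
  rewrite Dseq_dcomp; split; [|split; [|split]]; red.
  - rewrite act_dcomp, act_inj0_Tseq by exact F0.
    exact (dcomp_spair_zero F G0).
  - red in Fadd; rewrite !act_dcomp, !act_cross_Tseq, Fadd.
    exact (dcomp_spair_add _ _ _ Gadd).
  - rewrite !Dseq_dcomp, act_dcomp, act_lin_Tseq_Tseq by assumption.
    exact (dcomp_lin _ _ Glin).
  - rewrite !Dseq_dcomp, act_dcomp, act_swap_Tseq_Tseq by assumption.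
    setoid_rewrite dcomp_swap; [|exact Gsym].
    rewrite Tseq_Tseq; reflexivity.
Qed.

(** * Iterated derivatives *)

Fixpoint Dit_in (n : nat) (A B : X) (f : preD A B) : preD (Pn n A) B :=
  match n return preD (Pn n A) B with
  | O => f
  | S n' => Dit_in n' (Dseq f)
  end.

Global Instance Dit_in_Proper n (A B : X) :
  Proper (@seq_eq X _ _ ==> @seq_eq X _ _) (@Dit_in n A B).
Proof.
  revert A B; induction n as [|n IHn]; intros A B u v E; simpl; [exact E|].
  apply IHn; rewrite E; reflexivity.
Qed.

Lemma Dit_in_spair n : forall (A B B' : X) (u : preD A B) (v : preD A B'),
  Dit_in n (spair u v) == spair (Dit_in n u) (Dit_in n v).
Proof.
  induction n as [|n IHn]; intros; simpl; [reflexivity|].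
  rewrite Dseq_spair; apply IHn.
Qed.

Lemma Dit_in_act n : forall (A A' B : X) (h : hom A A') (u : preD A' B),
  Dit_in n (act h u) == act (Pmor X n h) (Dit_in n u).
Proof.
  induction n as [|n IHn]; intros; simpl; [reflexivity|].
  rewrite Dseq_act; apply IHn.
Qed.

Definition is_Dseq_in (A B : X) (f : preD A B) : Prop :=
  forall n, Daxioms (Dseq (Dit_in n f)).

Lemma is_Dseq_in_Dseq (A B : X) (f : preD A B) : is_Dseq_in f -> is_Dseq_in (Dseq f).
Proof. intros Hf n; exact (Hf (S n)). Qed.

Lemma is_Dseq_in_Tseq (A B : X) (f : preD A B) : is_Dseq_in f -> is_Dseq_in (Tseq f).
Proof.
  intros Hf n.
  assert (E : Tseq f == spair (act pi0 f) (Dseq f)) by (intro m; reflexivity).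
  rewrite E; setoid_rewrite Dit_in_spair; setoid_rewrite Dit_in_act.
  setoid_rewrite Dseq_spair; setoid_rewrite Dseq_act.
  apply Daxioms_spair; [apply Daxioms_act_Pmorph | exact (Hf (S n))].
  - apply additive_Pmor, additive_pi0.
  - exact (Hf n).
Qed.

Lemma is_Dseq_in_dcomp (A B C : X) (f : preD A B) (g : preD B C) :
  is_Dseq_in f -> is_Dseq_in g -> is_Dseq_in (dcomp f g).
Proof.
  intros Hf Hg n; revert A B C f g Hf Hg; induction n as [|n IHn]; intros A B C f g Hf Hg.
  - exact (Daxioms_dcomp (Hf 0) (Hg 0)).
  - simpl; rewrite Dseq_dcomp.
    apply IHn; [apply is_Dseq_in_Tseq | apply is_Dseq_in_Dseq]; assumption.
Qed.

(* [Dit] iterates D outside (on P^n(A) built as P(P^{n-1}(A))) and [Dit_in] inside (on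
   P^{n-1}(P(A))); the two index objects agree only up to an induction on [n], so the
   iterates are compared as dependent pairs. *)
Definition Dsig (B : X) (s : {Y : X & preD Y B}) : {Y : X & preD Y B} :=
  existT _ (Pob (projT1 s)) (Dseq (projT2 s)).

Lemma Dseq_Dit_sig n : forall (A B : X) (f : preD A B),
  existT (fun Y => preD Y B) (Pob (Po n A)) (Dseq (Dit n f)) =
  existT (fun Y => preD Y B) (Po n (Pob A)) (Dit n (Dseq f)).
Proof.
  induction n as [|n IHn]; intros; [reflexivity|].
  exact (f_equal (@Dsig B) (IHn A B f)).
Qed.

Lemma Dit_Dit_in_sig n : forall (A B : X) (f : preD A B),
  existT (fun Y => preD Y B) (Po n A) (Dit n f) =
  existT (fun Y => preD Y B) (Pn n A) (Dit_in n f).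
Proof.
  induction n as [|n IHn]; intros; simpl; [reflexivity|].
  rewrite Dseq_Dit_sig; apply IHn.
Qed.

Lemma is_Dseq_in_iff (A B : X) (f : preD A B) : is_Dseq f <-> is_Dseq_in f.
Proof.
  pose (P := fun s : {Y : X & preD Y B} => Daxioms (Dseq (projT2 s))).
  split; intros H n; specialize (H n).
  - change (P (existT (fun Y => preD Y B) _ (Dit n f))) in H.
    rewrite Dit_Dit_in_sig in H; exact H.
  - change (P (existT (fun Y => preD Y B) _ (Dit n f))).
    rewrite Dit_Dit_in_sig; exact H.
Qed.

End DSequences.

Theorem lemma4p5 (X : CLAC) (A B C : X) (f : preD A B) (g : preD B C) :
  is_Dseq f -> is_Dseq g -> is_Dseq (dcomp f g).
Proof.
  rewrite !is_Dseq_in_iff.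
  apply is_Dseq_in_dcomp.
Qed.
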